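(* Let $(\Omega,\mathscr{F},\mu)$ be a complete probability space, $K\subset L^{0}(\mu)$ absolutely convex, closed in probability and bounded in probability, and $E_K=\mathrm{span}(K)$. Let $\tau$ be a locally convex equicontinuous Köthe topology on $E_K$ with the Krein-Šmulian property which is $F$-regular. Then for every $g\in F$ the set $\{fg:f\in K\}$ is uniformly $\mu$-integrable.
   Context: $L^{0}(\mu)$ carries the topology of convergence in probability. The polar of $C\subset L^{0}(\mu)$ is $C^{\circ}=\{g\in L^{0}(\mu):\sup_{f\in C}\int_\Omega|fg|\,d\mu\leq1\}$; set $E'_K=\mathrm{span}(K^{\circ})$, paired with $E_K$ via $\langle f,g\rangle=\int_\Omega fg\,d\mu$; for $F\subset E'_K$, $\sigma(E_K,F)$ is the associated weak topology on $E_K$. A set is $K$-bounded if it lies in $\lambda K$ for some $\lambda>0$. A topology $\tau$ on $E_K$ is an equicontinuous Köthe topology if $K$ is $\tau$-compact and $\tau$ restricted to $K$-bounded sets equals $\sigma(E_K,F)$ for some $F\subset E'_K$ that is solid, separates the points of $E_K$, and contains a strictly positive element; $F$ is then said to induce $\tau$. Such $\tau$ has the Krein-Šmulian property if a convex set $C\subset E_K$ is $\tau$-closed iff $C\cap\lambda K$ is $\tau$-closed for each $\lambda>0$. Under the Krein-Šmulian property, each $g\in F$ gives a $\tau$-continuous functional $f\mapsto\int_\Omega fg\,d\mu$, yielding a natural map $F\to(E_K,\tau)^{\ast}$; $\tau$ is $F$-regular if $F$ induces $\tau$ and this map is surjective. *)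

(* L^0(mu) is represented by measurable functions
   T -> R, with every notion made invariant under a.e. equality where the
   paper's notion lives on equivalence classes. *)
From HB Require Import structures.
From mathcomp Require Import all_boot all_order all_algebra.
From mathcomp Require Import all_classical all_reals all_analysis.
From Stdlib Require List.
Set Implicit Arguments. Unset Strict Implicit. Unset Printing Implicit Defensive.
Import Order.TTheory GRing.Theory Num.Theory.
Import numFieldNormedType.Exports.
Local Open Scope classical_set_scope.
Local Open Scope ring_scope.

Section Defs.
Context {d : measure_display} {T : measurableType d} {R : realType}.
Implicit Types (mu : probability T R) (A B C K E F : set (T -> R)).

Definition L0 : set (T -> R) := [set f | measurable_fun setT f].

Definition abs_convex K := forall f h (a b : R), K f -> K h ->
  `|a| + `|b| <= 1 -> K (fun x => a * f x + b * h x).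

Definition convex_fset C := forall f h (t : R), C f -> C h -> 0 <= t <= 1 ->
  C (fun x => t * f x + (1 - t) * h x).

Definition cvg_in_prob mu (u : nat -> T -> R) (f : T -> R) :=
  forall eps : R, 0 < eps ->
    (fun n => mu [set x | (eps < `|u n x - f x|)%R]) @ \oo --> (0 : \bar R).

(* closed for the (metrizable) topology of convergence in probability *)
Definition closed_in_prob mu K := forall (u : nat -> T -> R) f,
  (forall n, K (u n)) -> measurable_fun setT f -> cvg_in_prob mu u f -> K f.

Definition bounded_in_prob mu K := forall eps : R, 0 < eps ->
  exists M : R, 0 < M /\ forall f, K f -> (mu [set x | (M < `|f x|)%R] <= eps%:E)%E.

Inductive lspan A : set (T -> R) :=
| lspan0 : lspan A (fun _ => 0)
| lspan_in f : A f -> lspan A f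
| lspan_comb f h (c : R) : lspan A f -> lspan A h ->
    lspan A (fun x => f x + c * h x).

Definition polar mu C : set (T -> R) :=
  [set g | measurable_fun setT g /\
    forall f, C f -> (\int[mu]_x (`|f x * g x|)%:E <= 1)%E].

Definition pairing mu (f g : T -> R) : R := Rintegral mu setT (fun x => f x * g x).

Definition scale_set (lam : R) K : set (T -> R) := (fun f => fun x => lam * f x) @` K.

Definition K_bounded K B := exists lam : R, 0 < lam /\ B `<=` scale_set lam K.

Definition is_topology E (tau : set (set (T -> R))) :=
  [/\ tau E, tau set0, (forall U, tau U -> U `<=` E),
      (forall UU : set (set (T -> R)), UU `<=` tau -> tau (\bigcup_(U in UU) U))
    & (forall U V, tau U -> tau V -> tau (U `&` V))].

Definition sigma_top mu E F : set (set (T -> R)) :=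
  [set U | U `<=` E /\ forall f, U f -> exists (s : seq (T -> R)) (eps : R),
    [/\ 0 < eps, (forall g, List.In g s -> F g) &
      [set h | E h /\ forall g, List.In g s ->
          `|pairing mu h g - pairing mu f g| < eps] `<=` U]].

Definition trace_top (tau : set (set (T -> R))) B : set (set (T -> R)) :=
  [set U `&` B | U in tau].

Definition locally_convex_top E (tau : set (set (T -> R))) :=
  [/\ is_topology E tau,
   (forall f h U, E f -> E h -> tau U -> U (fun x => f x + h x) ->
      exists V W, [/\ tau V, tau W, V f, W h &
        forall v w, V v -> W w -> U (fun x => v x + w x)]),
   (forall (a : R) f U, E f -> tau U -> U (fun x => a * f x) ->
      exists (delta : R) V, [/\ 0 < delta, tau V, V f &
        forall (b : R) v, `|b - a| < delta -> V v -> U (fun x => b * v x)]) &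
   (forall U f, tau U -> U f ->
      exists V, [/\ tau V, V f, V `<=` U & convex_fset V])].

Definition top_compact (tau : set (set (T -> R))) K :=
  forall UU : set (set (T -> R)), UU `<=` tau -> K `<=` \bigcup_(U in UU) U ->
    exists s : seq (set (T -> R)), (forall U, List.In U s -> UU U) /\
      K `<=` \bigcup_(U in [set U | List.In U s]) U.

Definition top_closed E (tau : set (set (T -> R))) C := C `<=` E /\ tau (E `\` C).

Definition Krein_Smulian K (tau : set (set (T -> R))) :=
  forall C, C `<=` lspan K -> convex_fset C ->
    (top_closed (lspan K) tau C <->
     forall lam : R, 0 < lam -> top_closed (lspan K) tau (C `&` scale_set lam K)).

Definition solid mu F := forall g h : T -> R, F g -> measurable_fun setT h ->
  {ae mu, forall x, `|h x| <= `|g x|} -> F h.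

Definition separates_points mu E F := forall f h : T -> R, E f -> E h ->
  ~ {ae mu, forall x, f x = h x} ->
  exists g, F g /\ pairing mu f g <> pairing mu h g.

Definition has_strictly_positive mu F := exists g, F g /\ {ae mu, forall x, 0 < g x}.

Definition induces mu K F (tau : set (set (T -> R))) :=
  [/\ F `<=` lspan (polar mu K), solid mu F, separates_points mu (lspan K) F,
      has_strictly_positive mu F &
      forall B, K_bounded K B ->
        trace_top tau B = trace_top (sigma_top mu (lspan K) F) B].

Definition equicontinuous_Kothe mu K (tau : set (set (T -> R))) :=
  [/\ is_topology (lspan K) tau, top_compact tau K & exists F, induces mu K F tau].

Definition lin_on E (phi : (T -> R) -> R) := forall f h (a : R), E f -> E h ->
  phi (fun x => f x + a * h x) = phi f + a * phi h.

Definition top_continuous E (tau : set (set (T -> R))) (phi : (T -> R) -> R) :=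
  forall O : set R, open O -> tau (E `&` phi @^-1` O).

Definition F_regular mu K F (tau : set (set (T -> R))) :=
  induces mu K F tau /\
  forall phi, lin_on (lspan K) phi -> top_continuous (lspan K) tau phi ->
    exists g, F g /\ forall f, lspan K f -> phi f = pairing mu f g.

Definition uniformly_integrable mu A := forall eps : R, 0 < eps ->
  exists M : R, forall h, A h ->
    (\int[mu]_(x in [set x | (M < `|h x|)%R]) (`|h x|)%:E <= eps%:E)%E.

End Defs.

From Stdlib Require List.
From mathcomp Require Import all_boot all_order all_algebra.
From mathcomp Require Import all_classical all_reals all_analysis.
From mathcomp Require Import measurable_realfun lra.
Import Order.TTheory GRing.Theory Num.Theory.
Local Open Scope classical_set_scope.
Local Open Scope ring_scope.
Set Implicit Arguments. Unset Strict Implicit. Unset Printing Implicit Defensive.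

(* On the K-bounded set K the topology tau is sigma(E_K, F), and F is solid,
   so g 1_S lies in F for every g in F and every measurable S.  Compactness
   of K then gives every sequence (f_n g) in H := {f g : f in K} a cluster
   point f g in H for the functionals h |-> \int_S h, finitely many at a
   time.  Moreover H is bounded in L^1 (g is in the span of the polar of K)
   and symmetric.  Such a set is uniformly integrable: otherwise a gliding
   hump yields h_k in H and disjoint sets D_k of vanishing measure with
   \int_{D_k} h_k large while h_k is small on the later humps.  A first
   cluster point x of (h_k) lets us extract a subsequence (h_{s_k}) whose
   integrals over the earlier humps D_{s_j}, j < k, are close to those of x,
   hence small; a cluster point x' of (h_{s_k}), tested on the union of the
   humps D_{s_j}, j >= m, then sees the large integral of the hump D_{s_k}
   and yields a contradiction. *)

Lemma choice_seq_prefix (X : Type) (x0 : X) (P : nat -> (nat -> X) -> X -> Prop) :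
  (forall k f g, (forall j, (j < k)%N -> f j = g j) -> P k f `<=` P k g) ->
  (forall k f, exists x, P k f x) ->
  exists s : nat -> X, forall k, P k s (s k).
Proof.
move=> P_local P_ex.
have [next nextP] := choice (fun kf : nat * (nat -> X) => P_ex kf.1 kf.2).
pose prefix := fix prefix k := if k is k'.+1 then
  (fun j => if j == k' then next (k', prefix k') else prefix k' j) else (fun=> x0).
pose s k := next (k, prefix k).
have prefixE k j : (j < k)%N -> prefix k j = s j.
  elim: k => // k IH; rewrite ltnS leq_eqVlt => /orP[/eqP->|jk] /=.
    by rewrite eqxx.
  by rewrite ifN ?IH // ltn_eqF.
exists s => k; apply: (P_local k (prefix k)); first exact: prefixE.
exact: (nextP (k, prefix k)).
Qed.

Definition tail_union (T : Type) (E : nat -> set T) (n : nat) :=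
  \bigcup_(j in [set j | (n <= j)%N]) E j.

Lemma tail_union_measurable d (T : measurableType d) (E : nat -> set T) n :
  (forall k, measurable (E k)) -> measurable (tail_union E n).
Proof. by move=> mE; apply: bigcup_measurable => k _; exact: mE. Qed.

Lemma measure_tail_union_le d (T : measurableType d) (R : realType)
    (mu : {measure set T -> \bar R}) (E : nat -> set T) (n : nat) (r : R) :
  (forall k, measurable (E k)) -> 0 <= r ->
  (forall j, (n <= j)%N -> (mu (E j) <= (r / (2 ^ j.+1)%:R)%:E)%E) ->
  (mu (tail_union E n) <= r%:E)%E.
Proof.
move=> mE r0 muE.
apply: le_trans (@measure_sigma_subadditive_tail _ _ _ mu _ E n mE
  (tail_union_measurable n mE) _) _.
  by move=> x [j /= nj Ejx]; exists j => //=; rewrite /setC /= ltnNge nj.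
apply: le_trans (epsilon_trick0 (fun j => (n <= j)%N) r0).
rewrite eseries_cond; apply: lee_nneseries => [i _ _|i /andP[_]].
  exact: measure_ge0.
exact: muE.
Qed.

Lemma Rintegral_bigcup_setU d (T : measurableType d) (R : realType)
    (mu : {measure set T -> \bar R}) (F : nat -> set T) (X Y : set nat)
    (f : T -> R) :
  (forall i, measurable (F i)) -> trivIset setT F -> X `&` Y = set0 ->
  mu.-integrable setT (EFin \o f) ->
  \int[mu]_(x in \bigcup_(i in X `|` Y) F i) f x =
  \int[mu]_(x in \bigcup_(i in X) F i) f x +
  \int[mu]_(x in \bigcup_(i in Y) F i) f x.
Proof.
move=> mF F_triv XY0 f_int; have mU Z : measurable (\bigcup_(i in Z) F i).
  by apply: bigcup_measurable => i _; exact: mF.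
rewrite bigcup_setU Rintegral_setU //.
  by apply: integrableS f_int => //; exact: measurableU.
apply/disj_set2P/seteqP; split => // x [[i Xi Fix] [j Yj Fjx]].
have ij : i = j by apply: F_triv => //; exists x.
suff : (X `&` Y) i by rewrite XY0.
by split; rewrite // ij.
Qed.

Lemma measurable_ltr_set d (T : measurableType d) (R : realType) (f : T -> R) (y : R) :
  measurable_fun setT f -> measurable [set x | y < f x].
Proof.
by move=> mf; have := mf measurableT _ (measurable_itv `]y, +oo[);
  rewrite setTI preimage_itvoy.
Qed.

Lemma Rintegral_normr_gt_split d (T : measurableType d) (R : realType)
    (mu : {measure set T -> \bar R}) (h : T -> R) (M : R) :
  mu.-integrable setT (EFin \o h) -> 0 <= M ->
  \int[mu]_(x in [set x | M < `|h x|]) `|h x| =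
  \int[mu]_(x in [set x | M < h x]) h x +
  \int[mu]_(x in [set x | M < - h x]) - h x.
Proof.
move=> h_int M_ge0; have mh : measurable_fun setT h.
  exact/measurable_EFinP/(measurable_int _ h_int).
have mpos := measurable_ltr_set M mh.
have mneg := measurable_ltr_set M (measurable_funN mh).
have -> : [set x | M < `|h x|] = [set x | M < h x] `|` [set x | M < - h x].
  by apply/seteqP; split => x /=; rewrite ltr_normr => /orP.
rewrite Rintegral_setU //.
- congr (_ + _); apply: eq_Rintegral => x; rewrite inE /= => Mx.
    by rewrite gtr0_norm // (le_lt_trans M_ge0 Mx).
  by rewrite ltr0_norm // -oppr_gt0 (le_lt_trans M_ge0 Mx).
- apply: integrableS (integrable_norm h_int) => //; exact: measurableU.
- apply/disj_set2P/seteqP; split => // x [/= Mx Mx'].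
  by move: Mx Mx' M_ge0; lra.
Qed.

Lemma integral_norm_comb_le d (T : measurableType d) (R : realType)
    (mu : {measure set T -> \bar R}) (u v : T -> R) (c : R) :
  measurable_fun setT u -> measurable_fun setT v ->
  (\int[mu]_x (`|u x + c * v x|)%:E <=
   \int[mu]_x (`|u x|)%:E + (`|c|)%:E * \int[mu]_x (`|v x|)%:E)%E.
Proof.
move=> mfu mfv; have mnu : measurable_fun setT (EFin \o (fun x => `|u x|)).
  by apply/measurable_EFinP; exact: measurableT_comp.
have mnv : measurable_fun setT (EFin \o (fun x => `|v x|)).
  by apply/measurable_EFinP; exact: measurableT_comp.
rewrite -ge0_integralZl_EFin // -ge0_integralD //; last exact: emeasurable_funM.
apply: ge0_le_integral => //.
- apply/measurable_EFinP; apply: measurableT_comp => //.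
  by apply: measurable_funD => //; exact: measurable_funM.
- by apply: emeasurable_funD => //; exact: emeasurable_funM.
- by move=> x _; rewrite -EFinM -EFinD lee_fin -normrM ler_normD.
Qed.

Definition setint_cluster_point d (T : measurableType d) (R : realType)
    (mu : {measure set T -> \bar R}) (u : nat -> T -> R) (x : T -> R) :=
  forall (k : nat) (S : nat -> set T), (forall i, measurable (S i)) ->
  forall eta : R, 0 < eta -> forall N, exists2 n, (N <= n)%N &
    forall i, (i <= k)%N ->
      `|\int[mu]_(y in S i) u n y - \int[mu]_(y in S i) x y| < eta.

Definition has_setint_cluster_points d (T : measurableType d) (R : realType)
    (mu : {measure set T -> \bar R}) (H : set (T -> R)) :=
  forall u : nat -> T -> R, (forall n, H (u n)) ->
  exists2 x, H x & setint_cluster_point mu u x.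

Record gliding_hump d (T : measurableType d) (R : realType)
    (mu : {measure set T -> \bar R}) (H : set (T -> R)) (c : R)
    (h : nat -> T -> R) (D : nat -> set T) : Prop := GlidingHump {
  hump_in : forall k, H (h k);
  hump_measurable : forall k, measurable (D k);
  hump_trivIset : trivIset setT D;
  hump_large : forall k, 5 * c < \int[mu]_(x in D k) h k x;
  hump_later_small : forall k A, measurable A -> A `<=` tail_union D k.+1 ->
    `|\int[mu]_(x in A) h k x| < c;
  hump_tail_vanish : forall r : R, 0 < r ->
    exists n, (mu (tail_union D n) < r%:E)%E }.

Section no_gliding_hump.
Context d (T : measurableType d) (R : realType) (mu : {measure set T -> \bar R}).
Variables (H : set (T -> R)) (c : R) (h : nat -> T -> R) (D : nat -> set T).
Hypothesis H_int : forall y, H y -> mu.-integrable setT (EFin \o y).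
Hypothesis H_cluster : has_setint_cluster_points mu H.
Hypothesis hump : gliding_hump mu H c h D.

Let mD := hump_measurable hump.

Let c_gt0 : 0 < c.
Proof.
have := hump_later_small hump measurable0 (sub0set (tail_union D 1)).
by rewrite Rintegral_set0 normr0.
Qed.

Let block (s : nat -> nat) (m k : nat) :=
  \bigcup_(j in [set j | (m <= j < k)%N]) D (s j).

Let block_measurable s m k : measurable (block s m k).
Proof. by apply: bigcup_measurable => j _; exact: mD. Qed.

Lemma setint_small_on_tail y : H y -> exists N, forall A, measurable A ->
  A `<=` tail_union D N -> `|\int[mu]_(x in A) y x| < c.
Proof.
move=> Hy; have [r [r_gt0 y_ac]] := integral_normr_continuous (H_int Hy) c_gt0.
have [N muN] := hump_tail_vanish hump r_gt0.
exists N => A mA AN.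
apply: le_lt_trans (le_normr_Rintegral mA (integrableS _ _ _ (H_int Hy))) _ => //.
apply: y_ac => //; apply: le_lt_trans muN.
by apply: le_measure AN; rewrite inE //; exact: tail_union_measurable.
Qed.

Lemma diagonal_subsequence x N : setint_cluster_point mu h x ->
  exists s : nat -> nat, forall k, [/\ (N <= s k)%N,
    forall j, (j < k)%N -> (s j < s k)%N &
    forall m, (m <= k)%N -> `|\int[mu]_(y in block s m k) h (s k) y -
                               \int[mu]_(y in block s m k) x y| < c].
Proof.
move=> x_cluster.
apply: (choice_seq_prefix 0%N (P := fun k f n => [/\ (N <= n)%N,
  forall j, (j < k)%N -> (f j < n)%N &
  forall m, (m <= k)%N -> `|\int[mu]_(y in block f m k) h n y -
                             \int[mu]_(y in block f m k) x y| < c]))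
  => [k f g fg n|k f].
  have blockE m : block f m k = block g m k.
    by apply: eq_bigcupr => j /andP[_ jk]; rewrite fg.
  move=> [Nn fn f_close]; split => // [j jk|m mk]; first by rewrite -fg ?fn.
  by rewrite -blockE; exact: f_close.
have [n Nn close] := x_cluster k (fun m => block f m k) (block_measurable f ^~ k)
  c c_gt0 (N + \max_(j < k) (f j).+1)%N.
exists n; split => //; first exact: leq_trans (leq_addr _ _) Nn.
move=> j jk; have /= fj_le := @leq_bigmax _ (fun i : 'I_k => (f i).+1) (Ordinal jk).
exact: leq_trans fj_le (leq_trans (leq_addl N _) Nn).
Qed.

Lemma Rintegral_hump_split (s : nat -> nat) m k (f : T -> R) :
  (forall i j, (i < j)%N -> (s i < s j)%N) -> (m <= k)%N ->
  mu.-integrable setT (EFin \o f) ->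
  \int[mu]_(y in \bigcup_(j in [set j | (m <= j)%N]) D (s j)) f y =
  \int[mu]_(y in block s m k) f y + \int[mu]_(y in D (s k)) f y +
  \int[mu]_(y in \bigcup_(j in [set j | (k < j)%N]) D (s j)) f y.
Proof.
move=> s_incr mk f_int; have sD_triv : trivIset setT (fun j => D (s j)).
  apply: ltn_trivIset => n j jn; apply: (trivIsetP.1 (hump_trivIset hump)) => //.
  by rewrite ltn_eqF // s_incr.
have -> : [set j | (m <= j)%N] =
    ([set j | (m <= j < k)%N] `|` [set k]) `|` [set j | (k < j)%N].
  apply/seteqP; split => j /= mj; last first.
    by case: mj => [[/andP[]|->]|kj] //; exact: leq_trans mk (ltnW kj).
  case: (ltngtP j k) => [jk|kj|->];
    [by left; left; apply/andP | by right | by left; right].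
rewrite Rintegral_bigcup_setU ?Rintegral_bigcup_setU ?bigcup_set1 //.
- by apply/seteqP; split => // j [/andP[_ jk] /= jE]; rewrite jE ltnn in jk.
- apply/seteqP; split => // j [[/andP[_ jk]|/= ->] /= kj].
    by rewrite ltnNge ltnW in kj.
  by rewrite ltnn in kj.
Qed.

Lemma no_gliding_hump : False.
Proof.
have [x Hx x_cluster] := H_cluster (hump_in hump).
have [N x_small] := setint_small_on_tail Hx.
have [s s_prop] := diagonal_subsequence N x_cluster.
have s_incr j k : (j < k)%N -> (s j < s k)%N by have [_ + _] := s_prop k; apply.
have s_ge k : (k <= s k)%N.
  by elim: k => // k IH; exact: leq_ltn_trans IH (s_incr _ _ (ltnSn k)).
have [x' Hx' x'_cluster] := H_cluster (fun n => hump_in hump (s n)).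
have [m x'_small] := setint_small_on_tail Hx'.
pose U := \bigcup_(j in [set j | (m <= j)%N]) D (s j).
have mU : measurable U by apply: bigcup_measurable => j _; exact: mD.
have [k mk close_x'] := x'_cluster 0%N (fun=> U) (fun=> mU) c c_gt0 m.
have {}close_x' := close_x' 0%N (leqnn 0).
have [_ _ /(_ m mk) close_x] := s_prop k.
pose V := \bigcup_(j in [set j | (k < j)%N]) D (s j).
have U_split := Rintegral_hump_split s_incr mk (H_int (hump_in hump (s k))).
have V_small : `|\int[mu]_(y in V) h (s k) y| < c.
  apply: (hump_later_small hump).
    by apply: bigcup_measurable => j _; exact: mD.
  by move=> y [j /= kj Dy]; exists (s j) => //; exact: s_incr.
have block_small : `|\int[mu]_(y in block s m k) x y| < c.
  apply: x_small => // y [j /= _ Dy]; exists (s j) => //.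
  by have [] := s_prop j.
have U_small : `|\int[mu]_(y in U) x' y| < c.
  apply: x'_small => // y [j /= mj Dy]; exists (s j) => //.
  exact: leq_trans mj (s_ge j).
(* By the choice of [k], [\int_U h (s k) < 2 c]; by the decomposition it
   exceeds [- 2 c + 5 c - c]. *)
have := hump_large hump (s k); move: close_x' close_x V_small block_small U_small.
rewrite U_split !ltr_norml; lra.
Qed.

End no_gliding_hump.

Section gliding_hump_construction.
Context d (T : measurableType d) (R : realType) (mu : {measure set T -> \bar R}).
Variables (H : set (T -> R)) (c : R).
Hypothesis c_gt0 : 0 < c.
Hypothesis H_int : forall y, H y -> mu.-integrable setT (EFin \o y).

Section disjointify.
Variables (h : nat -> T -> R) (E : nat -> set T).
Hypothesis h_in : forall k, H (h k).
Hypothesis mE : forall k, measurable (E k).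
Hypothesis E_large : forall k, 6 * c < \int[mu]_(x in E k) h k x.
Hypothesis E_later_small : forall k A, measurable A -> A `<=` tail_union E k.+1 ->
  `|\int[mu]_(x in A) h k x| < c.
Hypothesis E_tail_vanish : forall r : R, 0 < r ->
  exists n, (mu (tail_union E n) < r%:E)%E.

Lemma gliding_hump_disjointify :
  gliding_hump mu H c h (fun k => E k `\` tail_union E k.+1).
Proof.
have mT n : measurable (tail_union E n) by exact: tail_union_measurable.
have mD k : measurable (E k `\` tail_union E k.+1) by exact: measurableD.
have tailD n : tail_union (fun k => E k `\` tail_union E k.+1) n `<=` tail_union E n.
  by move=> x [j /= nj [Ejx _]]; exists j.
split => //.
- apply: ltn_trivIset => j n nj; apply/seteqP; split => // x [[_ notTx] [Ejx _]].
  by apply: notTx; exists j.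
- move=> k; have Ek_split :
      E k = (E k `\` tail_union E k.+1) `|` (E k `&` tail_union E k.+1).
    by rewrite setDE -setIUr setUCl setIT.
  have mI := measurableI _ _ (mE k) (mT k.+1).
  have := E_large k; rewrite {1}Ek_split Rintegral_setU //; last 2 first.
  + by rewrite -Ek_split; exact: integrableS (H_int (h_in k)).
  + by apply/disj_set2P/seteqP; split => // x [[_ ?] [_ ?]].
  have := E_later_small mI (@subIsetr _ _ _).
  by rewrite ltr_norml; lra.
- move=> k A mA AD; exact: E_later_small mA (subset_trans AD (tailD _)).
- move=> r /E_tail_vanish[n muE]; exists n; apply: le_lt_trans muE.
  by apply: le_measure (tailD n); rewrite inE; exact: tail_union_measurable.
Qed.

End disjointify.

Hypothesis large_on_small_sets : forall r : R, 0 < r ->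
  exists2 y, H y & exists2 A, measurable A &
    (mu A < r%:E)%E /\ 6 * c < \int[mu]_(x in A) y x.

Let small_set_picker : exists pick : R -> (T -> R) * set T, forall r, 0 < r ->
  [/\ H (pick r).1, measurable (pick r).2, (mu (pick r).2 < r%:E)%E &
       6 * c < \int[mu]_(x in (pick r).2) (pick r).1 x].
Proof.
have /choice[pick pickP] : forall r : R, exists p : (T -> R) * set T, 0 < r ->
    [/\ H p.1, measurable p.2, (mu p.2 < r%:E)%E &
         6 * c < \int[mu]_(x in p.2) p.1 x].
  move=> r; have [r_gt0|] := pselect (0 < r); last by exists (0, set0).
  by have [y Hy [A mA [muA yA]]] := large_on_small_sets r_gt0; exists (y, A).
by exists pick.
Qed.

Let abs_continuity_modulus : exists delta : (T -> R) -> R, forall y, H y ->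
  0 < delta y /\ forall A, measurable A -> (mu A < (delta y)%:E)%E ->
    \int[mu]_(x in A) `|y x| < c.
Proof.
have /choice[delta deltaP] : forall y : T -> R, exists r : R, H y ->
    0 < r /\ forall A, measurable A -> (mu A < r%:E)%E ->
      \int[mu]_(x in A) `|y x| < c.
  move=> y; have [Hy|] := pselect (H y); last by exists 0.
  by have [r [r_gt0 y_ac]] := integral_normr_continuous (H_int Hy) c_gt0; exists r.
by exists delta.
Qed.

Lemma large_set_integrals_sequence : exists h E, [/\ forall k, H (h k),
  forall k, measurable (E k), forall k, 6 * c < \int[mu]_(x in E k) h k x,
  forall k A, measurable A -> A `<=` tail_union E k.+1 ->
    `|\int[mu]_(x in A) h k x| < c &
  forall r : R, 0 < r -> exists n, (mu (tail_union E n) < r%:E)%E].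
Proof.
have [pick pickP] := small_set_picker.
have [delta deltaP] := abs_continuity_modulus.
(* [rho k] bounds the measure of the tail of (E j) from [k] on, and [rho k.+1]
   lies below the absolute-continuity modulus of [h k], so [h k] is small on
   every later [E j]; halving at each step makes the tails vanish. *)
pose rho := fix rho k := if k is k'.+1 then
  Num.min (rho k') (delta (pick (rho k' / (2 ^ k'.+1)%:R)).1) / 2 else 1.
pose h k := (pick (rho k / (2 ^ k.+1)%:R)).1.
pose E k := (pick (rho k / (2 ^ k.+1)%:R)).2.
have rhoS k : rho k.+1 = Num.min (rho k) (delta (h k)) / 2 by [].
have weight_gt0 k (r : R) : 0 < r -> 0 < r / (2 ^ k.+1)%:R.
  by move=> r_gt0; rewrite divr_gt0 // ltr0n expn_gt0.
have rho_gt0 k : 0 < rho k.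
  elim: k => // k IH; rewrite rhoS divr_gt0 // lt_min IH.
  have [Hh _ _ _] := pickP _ (weight_gt0 k _ IH).
  by have [] := deltaP _ Hh.
have pickPk k := pickP _ (weight_gt0 k _ (rho_gt0 k)).
have mE k : measurable (E k) by have [] := pickPk k.
have rho_lt k : rho k.+1 < Num.min (rho k) (delta (h k)).
  have [Hh _ _ _] := pickPk k; have [delta_gt0 _] := deltaP _ Hh.
  by rewrite rhoS ltr_pdivrMr // ltr_pMr ?ltr1n // lt_min rho_gt0.
have rho_le k j : (k <= j)%N -> rho j <= rho k.
  elim: j => [|j IH]; first by rewrite leqn0 => /eqP->.
  rewrite leq_eqVlt => /orP[/eqP->//|]; rewrite ltnS => /IH.
  by apply: le_trans; apply/ltW; apply: lt_le_trans (rho_lt j) _; rewrite ge_min lexx.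
have rho_le_half n : rho n <= 1 / 2 ^+ n.
  elim: n => [|n IH]; first by rewrite expr0 divr1.
  rewrite rhoS exprS invfM mul1r mulrC ler_pM2l ?invr_gt0 //.
  by rewrite ge_min (le_trans IH) // mul1r.
have tail_le n : (mu (tail_union E n) <= (rho n)%:E)%E.
  apply: measure_tail_union_le => // [|j nj]; first exact/ltW/rho_gt0.
  have [_ _ muE _] := pickPk j; apply/ltW/(lt_le_trans muE).
  by rewrite lee_fin ler_pM2r ?invr_gt0 ?ltr0n ?expn_gt0 // rho_le.
exists h, E; split => [k|k|k|k A mA AE|r r_gt0].
- by have [] := pickPk k.
- exact: mE.
- by have [] := pickPk k.
- have [Hh _ _ _] := pickPk k; have [_ h_ac] := deltaP _ Hh.
  apply: le_lt_trans (le_normr_Rintegral mA (integrableS _ _ _ (H_int Hh))) _ => //.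
  apply: (h_ac _ mA).
  have mT := tail_union_measurable k.+1 mE.
  apply: le_lt_trans (le_measure mu (mem_set mA) (mem_set mT) AE) _.
  apply: le_lt_trans (tail_le _) _; rewrite lte_fin.
  by apply: lt_le_trans (rho_lt k) _; rewrite ge_min lexx orbT.
- have [n _ n_large] := near_infty_natSinv_expn_lt (PosNum r_gt0).
  exists n; apply: le_lt_trans (tail_le n) _; rewrite lte_fin.
  exact: le_lt_trans (rho_le_half n) (n_large n (leqnn n)).
Qed.

End gliding_hump_construction.

Section uniform_integrability.
Context d (T : measurableType d) (R : realType).
Variables (mu : probability T R) (H : set (T -> R)) (C : R).
Hypothesis H_meas : forall h, H h -> measurable_fun setT h.
Hypothesis H_bound : forall h, H h -> (\int[mu]_x (`|h x|)%:E <= C%:E)%E.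
Hypothesis H_opp : forall h, H h -> H (fun x => - h x).

Lemma bounded_integrable h : H h -> mu.-integrable setT (EFin \o h).
Proof.
move=> Hh; apply/integrableP; split; first exact/measurable_EFinP/H_meas.
by apply: le_lt_trans (H_bound Hh) (ltey _).
Qed.

Lemma markov_bound h (M : R) : H h -> 0 < M ->
  (M%:E * mu [set x | (M < h x)%R] <= C%:E)%E.
Proof.
move=> Hh M_gt0; have mE := measurable_ltr_set M (H_meas Hh).
rewrite -integral_cst //; apply: le_trans _ (H_bound Hh).
apply: le_trans _ (ge0_subset_integral mu mE measurableT _ _ (subsetT _)) => //.
- apply: ge0_le_integral => //.
  + by move=> x _; rewrite lee_fin ltW.
  + apply/measurable_EFinP; apply: measurableT_comp => //.
    exact: measurable_funS (H_meas Hh).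
  + by move=> x Mx; rewrite lee_fin (le_trans (ltW Mx)) // ler_norm.
- by apply/measurable_EFinP; apply: measurableT_comp => //; exact: H_meas.
Qed.

Lemma uniformly_integrable_of_small_setint :
  (forall e : R, 0 < e -> exists2 r : R, 0 < r & forall h A, H h -> measurable A ->
     (mu A < r%:E)%E -> \int[mu]_(x in A) h x <= e) ->
  uniformly_integrable mu H.
Proof.
move=> small e e_gt0.
have [r r_gt0 r_small] := small (e / 2) (divr_gt0 e_gt0 (ltr0Sn _ 1)).
pose M := (`|C| + 1) / r.
have M_gt0 : 0 < M by rewrite divr_gt0 // ltr_pwDr.
have tail_small g : H g -> (mu [set x | (M < g x)%R] < r%:E)%E.
  move=> Hg; have mE := measurable_ltr_set M (H_meas Hg).
  have := markov_bound Hg M_gt0.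
  rewrite -(fineK (fin_num_measure mu _ mE)) -EFinM !lee_fin lte_fin => markov.
  rewrite ltNge; apply/negP => r_le; have := ler_wpM2l (ltW M_gt0) r_le.
  have : M * r = `|C| + 1 by rewrite divfK ?gt_eqF.
  by have := ler_norm C; lra.
exists M => h Hh; have h_int := bounded_integrable Hh.
have mA : measurable [set x | M < `|h x|].
  by apply: measurable_ltr_set; apply: measurableT_comp => //; exact: H_meas.
rewrite -[leLHS]fineK; last first.
  apply: integrable_fin_num => //.
  exact: integrableS (integrable_norm h_int).
rewrite lee_fin -/(Rintegral mu _ (fun x => `|h x|)).
rewrite (Rintegral_normr_gt_split h_int (ltW M_gt0)).
have pos := r_small _ _ Hh (measurable_ltr_set M (H_meas Hh)) (tail_small _ Hh).
have neg := r_small _ _ (H_opp Hh)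
  (measurable_ltr_set M (H_meas (H_opp Hh))) (tail_small _ (H_opp Hh)).
by move: pos neg; lra.
Qed.

End uniform_integrability.

Theorem uniformly_integrable_of_setint_cluster d (T : measurableType d)
    (R : realType) (mu : probability T R) (H : set (T -> R)) (C : R) :
  (forall h, H h -> measurable_fun setT h) ->
  (forall h, H h -> (\int[mu]_x (`|h x|)%:E <= C%:E)%E) ->
  (forall h, H h -> H (fun x => - h x)) ->
  has_setint_cluster_points mu H -> uniformly_integrable mu H.
Proof.
move=> H_meas H_bound H_opp H_cluster.
have H_int := bounded_integrable H_meas H_bound.
apply: (uniformly_integrable_of_small_setint H_meas H_bound H_opp) => e e_gt0.
apply: contrapT => not_small; have c_gt0 : 0 < e / 6 by rewrite divr_gt0.
have large r : 0 < r -> exists2 y, H y & exists2 A, measurable A &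
    (mu A < r%:E)%E /\ 6 * (e / 6) < \int[mu]_(x in A) y x.
  move=> r_gt0; apply: contrapT => none; apply: not_small; exists r => // y A Hy mA muA.
  rewrite leNgt; apply/negP => ey; apply: none; exists y => //; exists A => //.
  by rewrite mulrC divfK.
have [h [E [h_in mE E_large E_later_small E_tail_vanish]]] :=
  large_set_integrals_sequence c_gt0 H_int large.
exact: no_gliding_hump H_int H_cluster
  (gliding_hump_disjointify H_int h_in mE E_large E_later_small E_tail_vanish).
Qed.

Section Kothe_dual.
Context d (T : measurableType d) (R : realType) (mu : probability T R).

Lemma lspan_L0 (A : set (T -> R)) : A `<=` L0 -> lspan A `<=` L0.
Proof.
move=> AL0 f; elim => [|f0 /AL0 //|f1 h c _ m1 _ m2].
  exact: measurable_cst.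
apply: measurable_funD => //.
by apply: measurable_funM => //; exact: measurable_cst.
Qed.

Lemma polar_span_L0 (K : set (T -> R)) : lspan (polar mu K) `<=` L0.
Proof. by apply: lspan_L0 => g []. Qed.

Lemma polar_span_bounded (K : set (T -> R)) g : K `<=` L0 ->
  lspan (polar mu K) g ->
  exists C : R, forall f, K f -> (\int[mu]_x (`|f x * g x|)%:E <= C%:E)%E.
Proof.
move=> KL0; elim=> [|g0 [_ g0_polar]|g1 g2 c g1_span [C1 C1_bound] g2_span
  [C2 C2_bound]].
- by exists 0 => f _; under eq_integral do rewrite mulr0 normr0; rewrite integral0.
- by exists 1.
exists (C1 + `|c| * C2) => f Kf.
have mf : measurable_fun setT f := KL0 _ Kf.
have mfg g' : lspan (polar mu K) g' -> measurable_fun setT (fun x => f x * g' x).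
  by move=> /polar_span_L0 mg'; exact: measurable_funM.
under eq_integral do rewrite mulrDr mulrCA.
apply: le_trans (integral_norm_comb_le mu c (mfg _ g1_span) (mfg _ g2_span)) _.
by rewrite EFinD EFinM leeD ?lee_wpmul2l ?C1_bound ?C2_bound.
Qed.

End Kothe_dual.

Lemma top_compact_cluster d (T : measurableType d) (R : realType)
    (tau : set (set (T -> R))) (K : set (T -> R)) (u : nat -> T -> R) :
  top_compact tau K -> (forall n, K (u n)) ->
  exists2 f, K f & forall V, tau V -> V f -> forall N, exists2 n, (N <= n)%N & V (u n).
Proof.
move=> K_compact Ku; apply: contrapT => no_cluster.
pose UU := [set V | tau V /\ exists N, forall n, (N <= n)%N -> ~ V (u n)].
have UU_cover : K `<=` \bigcup_(V in UU) V.
  move=> f Kf; apply: contrapT => f_uncovered; apply: no_cluster.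
  exists f => // V tV Vf N.
  apply: contrapT => V_late; apply: f_uncovered; exists V => //; split => //.
  by exists N => n Nn Vun; apply: V_late; exists n.
have [s [sUU s_cover]] := K_compact UU (fun V => @proj1 _ _) UU_cover.
have [N N_avoid] : exists N, forall V, List.In V s -> forall n, (N <= n)%N -> ~ V (u n).
  elim: s sUU {s_cover} => [|V s IH] sUU; first by exists 0%N.
  have [N1 N1_avoid] := IH (fun W sW => sUU W (or_intror sW)).
  have [_ [N2 N2_avoid]] := sUU V (or_introl erefl).
  exists (maxn N1 N2) => W [<-|sW] n Nn.
    by apply: N2_avoid; exact: leq_trans (leq_maxr _ _) Nn.
  by apply: N1_avoid => //; exact: leq_trans (leq_maxl _ _) Nn.
have [V sV VuN] := s_cover _ (Ku N).
exact: N_avoid V sV N (leqnn N) VuN.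
Qed.

Section weak_cluster.
Context d (T : measurableType d) (R : realType) (mu : probability T R).

(* The slack [r] leaves room for a basic [sigma_top] neighbourhood of radius
   [r / 2] around each point. *)
Definition weak_nbhs (E : set (T -> R)) (f : T -> R) (k : nat) (G : nat -> T -> R)
    (eta : R) : set (T -> R) :=
  [set h | E h /\ exists2 r : R, 0 < r & forall i, (i <= k)%N ->
    `|pairing mu h (G i) - pairing mu f (G i)| < eta - r].

Lemma weak_nbhs_open (E F : set (T -> R)) f k G eta :
  (forall i, (i <= k)%N -> F (G i)) -> sigma_top mu E F (weak_nbhs E f k G eta).
Proof.
move=> FG; split => [h []//|h [Eh [r r_gt0 hr]]].
have inG i : (i <= k)%N -> List.In (G i) (List.map G (List.seq 0 k.+1)).
  move=> ik; apply/List.in_map_iff; exists i; split => //.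
  by apply/List.in_seq; split; [exact: PeanoNat.Nat.le_0_l | apply/ssrnat.ltP].
exists (List.map G (List.seq 0 k.+1)), (r / 2); split.
- by rewrite divr_gt0.
- by move=> g /List.in_map_iff [i [<- /List.in_seq [_ /ssrnat.ltP]]]; exact: FG.
move=> h' [Eh' h'_close]; split => //; exists (r / 2); first by rewrite divr_gt0.
move=> i ik; have := h'_close _ (inG i ik); have := hr i ik.
set a := pairing mu h' (G i); set b := pairing mu h (G i); set c := pairing mu f (G i).
have := ler_normD (a - b) (b - c); rewrite addrA subrK; lra.
Qed.

Lemma weak_cluster (K F : set (T -> R)) (tau : set (set (T -> R))) (u : nat -> T -> R) :
  top_compact tau K ->
  trace_top tau K = trace_top (sigma_top mu (lspan K) F) K ->
  (forall n, K (u n)) ->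
  exists2 f, K f & forall (k : nat) (G : nat -> T -> R),
    (forall i, (i <= k)%N -> F (G i)) ->
    forall eta : R, 0 < eta -> forall N, exists2 n, (N <= n)%N &
      forall i, (i <= k)%N -> `|pairing mu (u n) (G i) - pairing mu f (G i)| < eta.
Proof.
move=> K_compact traceK Ku; have [f Kf f_cluster] := top_compact_cluster K_compact Ku.
exists f => // k G FG eta eta_gt0 N.
pose O := weak_nbhs (lspan K) f k G eta.
have : trace_top (sigma_top mu (lspan K) F) K (O `&` K).
  by exists O => //; exact: weak_nbhs_open.
rewrite -traceK => -[V tV VK].
have [|n Nn Vun] := f_cluster V tV _ N.
  have : (O `&` K) f.
    split => //; split; first exact: lspan_in.
    by exists (eta / 2) => [|i _]; rewrite ?divr_gt0 // subrr normr0; lra.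
  by rewrite -VK => -[].
have : (V `&` K) (u n) by [].
rewrite VK => -[[_ [r r_gt0 close]] _].
by exists n => // i ik; have := close i ik; lra.
Qed.

Lemma pairing_indic (f g : T -> R) (S : set T) :
  pairing mu f (fun y => g y * \1_S y) = \int[mu]_(y in S) (f y * g y).
Proof.
rewrite /pairing [RHS]Rintegral_mkcond; apply: eq_Rintegral => y _.
by rewrite /patch indicE; case: (y \in S); rewrite /= ?mulr1 ?mulr0.
Qed.

End weak_cluster.

Section products.
Context d (T : measurableType d) (R : realType) (mu : probability T R).
Variables (K : set (T -> R)) (g : T -> R).

Lemma K_bounded_refl : K_bounded K K.
Proof.
by exists 1; split => // f Kf; exists f => //; apply/funext => x; rewrite mul1r.
Qed.

Lemma abs_convex_opp f : abs_convex K -> K f -> K (fun x => - f x).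
Proof.
move=> K_abs Kf; have := K_abs f f (-1) 0 Kf Kf.
rewrite normrN normr1 normr0 addr0 lexx => /(_ isT).
by congr K; apply/funext => x; rewrite mulN1r mul0r addr0.
Qed.

Lemma products_setint_cluster (F : set (T -> R)) (tau : set (set (T -> R))) :
  top_compact tau K ->
  trace_top tau K = trace_top (sigma_top mu (lspan K) F) K ->
  solid mu F -> F g -> measurable_fun setT g ->
  has_setint_cluster_points mu [set (fun x => f x * g x) | f in K].
Proof.
move=> K_compact traceK F_solid Fg mg u u_prod.
have /choice[v v_prop] : forall n, exists f, K f /\ (fun x => f x * g x) = u n.
  by move=> n; have [f Kf fu] := u_prod n; exists f.
have [f Kf f_cluster] := weak_cluster K_compact traceK (fun n => (v_prop n).1).
exists (fun x => f x * g x); first by exists f.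
move=> k S mS eta eta_gt0 N.
have FgS i : F (fun y => g y * \1_(S i) y).
  apply: (F_solid g) => //; first exact: measurable_funM.
  apply: aeW => x; rewrite normrM indicE.
  by case: (x \in S i); rewrite /= ?normr1 ?mulr1 ?normr0 ?mulr0.
have [n Nn close] := f_cluster k _ (fun i _ => FgS i) eta eta_gt0 N.
by exists n => // i ik; have := close i ik; rewrite !pairing_indic -(v_prop n).2.
Qed.

End products.

Theorem lemma5p8 (d : measure_display) (T : measurableType d) (R : realType)
  (mu : probability T R) (K : set (T -> R)) (tau : set (set (T -> R)))
  (F : set (T -> R)) :
  measure_is_complete mu ->
  K `<=` L0 -> abs_convex K -> closed_in_prob mu K -> bounded_in_prob mu K ->
  locally_convex_top (lspan K) tau ->
  equicontinuous_Kothe mu K tau ->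
  Krein_Smulian K tau ->
  F_regular mu K F tau ->
  forall g, F g -> uniformly_integrable mu [set (fun x => f x * g x) | f in K].
Proof.
(* Only the compactness of K, the facts that F lies in the span of the polar
   and is solid, and the agreement of tau with sigma(E_K, F) on K are used. *)
move=> _ KL0 K_abs _ _ _ [_ K_compact _] _ [[F_polar F_solid _ _ F_trace] _] g Fg.
have g_span := F_polar g Fg; have mg := polar_span_L0 g_span.
have [C fg_bound] := polar_span_bounded KL0 g_span.
apply: (@uniformly_integrable_of_setint_cluster _ _ _ _ _ C).
- by move=> _ [f Kf <-]; apply: measurable_funM => //; exact: KL0.
- by move=> _ [f Kf <-]; exact: fg_bound.
- move=> _ [f Kf <-]; exists (fun x => - f x); first exact: abs_convex_opp.
  by apply/funext => x; rewrite mulNr.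
- exact: products_setint_cluster K_compact (F_trace K (K_bounded_refl K)) F_solid Fg mg.
Qed.
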